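(* Let $T\in\mathbb R^{m\times n}$ be injective and satisfy the positive cone condition, and let $y\in\mathbb R^m$. Let $0<\mu<\lambda$ and suppose $N(\lambda)\subset N(\mu)$ and $\xi_\lambda^i=\xi_\mu^i$ for all $i\in I(\lambda)$. Then $$x_\mu^i\,\mathrm{sign}(x_\lambda^i)\le|x_\lambda^i|\qquad\text{for all }i\in I(\lambda).$$
   Context: For $\lambda>0$, $x_\lambda$ is the unique minimizer of $x\mapsto\frac{\lambda}{2}\|Tx-y\|_2^2+\|x\|_1$ on $\mathbb R^n$, and $\xi_\lambda:=\lambda T^{T}(y-Tx_\lambda)$, which satisfies $\xi_\lambda^i\in[-1,1]$ and $\xi_\lambda^i=\mathrm{sign}(x_\lambda^i)$ when $x_\lambda^i\ne0$. $N(\lambda)=\{i:x_\lambda^i=0\}$, $I(\lambda)=\{i:x_\lambda^i\ne0\}$. Positive cone condition: for every nonempty $J\subset\{1,\dots,n\}$, letting $T^J$ be the submatrix of $T$ consisting of the columns indexed by $J$ and $S_J=((T^J)^{T}T^J)^{-1}$, one has $(S_J)_{i,i}-\sum_{j\ne i}|(S_J)_{i,j}|\ge0$ for all $i\in J$ (equivalently, $(T^TT)^{-1}$ is diagonally dominant in this sense). *)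

From HB Require Import structures.
From mathcomp Require Import all_boot all_order all_algebra.
From mathcomp Require Import reals.
Set Implicit Arguments. Unset Strict Implicit. Unset Printing Implicit Defensive.
Import Order.TTheory GRing.Theory Num.Theory.
Local Open Scope ring_scope.

Section Lasso.
Variables (R : realType) (m n : nat).

Definition sqnorm2 (k : nat) (v : 'cV[R]_k) : R := \sum_(i < k) (v i 0) ^+ 2.
Definition norm1 (k : nat) (v : 'cV[R]_k) : R := \sum_(i < k) `|v i 0|.

Definition lasso_obj (lam : R) (T : 'M[R]_(m, n)) (y : 'cV[R]_m) (x : 'cV[R]_n) : R :=
  lam / 2 * sqnorm2 (T *m x - y) + norm1 x.

Definition is_unique_lasso_min (lam : R) (T : 'M[R]_(m, n)) (y : 'cV[R]_m)
  (x : 'cV[R]_n) : Prop :=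
  (forall z, lasso_obj lam T y x <= lasso_obj lam T y z) /\
  (forall z, (forall w, lasso_obj lam T y z <= lasso_obj lam T y w) -> z = x).

Definition lasso_xi (lam : R) (T : 'M[R]_(m, n)) (y : 'cV[R]_m) (x : 'cV[R]_n)
  : 'cV[R]_n := lam *: (T^T *m (y - T *m x)).

(* T^J : the submatrix of T made of the columns indexed by J (in increasing order) *)
Definition colsJ (T : 'M[R]_(m, n)) (J : {set 'I_n}) : 'M[R]_(m, #|J|) :=
  colsub (fun k : 'I_#|J| => enum_val k) T.

Definition SJ (T : 'M[R]_(m, n)) (J : {set 'I_n}) : 'M[R]_#|J| :=
  invmx ((colsJ T J)^T *m colsJ T J).

Definition positive_cone_condition (T : 'M[R]_(m, n)) : Prop :=
  forall J : {set 'I_n}, J != set0 ->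
    forall i : 'I_#|J|,
      0 <= SJ T J i i - \sum_(j < #|J| | j != i) `|SJ T J i j|.

End Lasso.

From HB Require Import structures.
From mathcomp Require Import all_boot all_order all_algebra.
From mathcomp Require Import reals.
From mathcomp Require Import lra ring.
Set Implicit Arguments. Unset Strict Implicit. Unset Printing Implicit Defensive.
Import Order.TTheory GRing.Theory Num.Theory.
Local Open Scope ring_scope.

(* Let J = I(lam) be the support of x_lam.  Moving a single nonzero coordinate
   of a minimizer along a line is a smooth perturbation of the objective, so
   first-order optimality gives the stationarity xi_lam^i = sign(x_lam^i) on J.
   Since N(lam) is contained in N(mu), both x_lam and x_mu are supported in J;
   restricted to J, with C = T^J and s = sign(x_lam) on J, they satisfy the
   normal equations  lam C^T (y - C x_lam) = s = mu C^T (y - C x_mu), the second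
   one by the hypothesis xi_mu = xi_lam on J.  The Gram matrix C^T C is
   invertible because T is injective, hence
       x_lam - x_mu = (1/mu - 1/lam) S_J s   on J.
   Finally the diagonal dominance of S_J (positive cone condition) makes
   s_i (S_J s)_i >= 0, so x_mu^i sign(x_lam^i) <= |x_lam^i|. *)

Lemma first_order_zero (R : realFieldType) (d a X : R) : 0 < X ->
  (forall t, `|t| < X -> 0 <= t * d + t ^+ 2 * a) -> d = 0.
Proof.
move=> X0 H; apply/eqP; apply/negPn/negP => d0.
have ad : 0 < `|d| by rewrite normr_gt0.
have a0 : 0 <= `|a| := normr_ge0 a.
have ha : a <= `|a| := ler_norm a.
pose e := Num.min (X / 2) (`|d| / (2 * `|a| + 1)).
have eX : e <= X / 2 by rewrite ge_min lexx.
have ed : e <= `|d| / (2 * `|a| + 1) by rewrite ge_min lexx orbT.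
have e0 : 0 < e by rewrite lt_min; apply/andP; split; [lra | apply: divr_gt0; lra].
clearbody e.
have {}ed : e * (2 * `|a| + 1) <= `|d| by rewrite -ler_pdivlMr //; lra.
rewrite mulrDr mulr1 mulrCA in ed.
have Hpos : 0 <= e * d + e * (e * a).
  by rewrite mulrA -expr2; apply: H; rewrite ger0_norm; lra.
have Hneg : 0 <= - e * d + e * (e * a).
  by rewrite mulrA -expr2 -sqrrN; apply: H; rewrite normrN ger0_norm; lra.
have ea : e * a <= e * `|a| by rewrite ler_pM2l.
have Nd : - d <= e * a by rewrite -(ler_pM2l e0); lra.
have Pd : d <= e * a by rewrite -(ler_pM2l e0); lra.
case: (lerP 0 d) => dd.
- by rewrite (ger0_norm dd) in ed ad; lra.
- by rewrite (ltr0_norm dd) in ed ad; lra.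
Qed.

Lemma norm_shift (R : realDomainType) (x t : R) : x != 0 -> `|t| < `|x| ->
  `|x + t| = `|x| + Num.sg x * t.
Proof.
move=> x0 ht; case: (ltrP 0 x) => hx.
- rewrite (gtr0_sg hx) mul1r (gtr0_norm hx) in ht *.
  have := ler_norm (- t); rewrite normrN => Nt.
  by rewrite ger0_norm; lra.
- have {}hx : x < 0 by rewrite lt_neqAle x0 hx.
  rewrite (ltr0_sg hx) mulN1r (ltr0_norm hx) in ht *.
  have := ler_norm t => Pt.
  by rewrite ler0_norm; lra.
Qed.

Lemma sign_shrink (R : realDomainType) (x x' c p : R) :
  x - x' = c * p -> 0 <= c -> 0 <= Num.sg x * p -> x' * Num.sg x <= `|x|.
Proof.
move=> diff c_ge0 p_sg; have := mulr_ge0 c_ge0 p_sg.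
have -> : x' = x - c * p by rewrite -diff opprB addrC subrK.
rewrite normrEsg; lra.
Qed.

Lemma diag_dominance_sign (R : realDomainType) (k : nat) (S : 'M[R]_k)
  (s : 'cV[R]_k) (j : 'I_k) :
  (forall l, `|s l 0| <= 1) -> `|s j 0| = 1 ->
  S j j - \sum_(l < k | l != j) `|S j l| <= s j 0 * (S *m s) j 0.
Proof.
move=> s_le1 sj1; have sj2 : s j 0 * s j 0 = 1.
  by rewrite -expr2 -real_normK ?num_real // sj1 expr1n.
rewrite mxE [X in _ <= _ * X](bigD1 j) //= mulrDr mulrCA sj2 mulr1.
rewrite lerD2l -sumrN mulr_sumr; apply: ler_sum => l _.
have bound : `|s j 0 * (S j l * s l 0)| <= `|S j l|.
  rewrite !normrM sj1 mul1r -[X in _ <= X]mulr1.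
  by apply: ler_wpM2l => //.
by rewrite lerNl; apply: le_trans (ler_norm _) _; rewrite normrN.
Qed.

Lemma self_gram_eq0 (R : realDomainType) (p : nat) (w : 'cV[R]_p) :
  w^T *m w = 0 -> w = 0.
Proof.
move/(congr1 (fun M : 'M[R]_1 => M 0 0)); rewrite !mxE => sq0.
have sq_ge0 (a : 'I_p) : 0 <= w^T 0 a * w a 0 by rewrite mxE -expr2 sqr_ge0.
apply/matrixP => a b; rewrite (ord1 b) mxE.
have /eqP := psumr_eq0P (fun a _ => sq_ge0 a) sq0 (i := a) isT.
by rewrite mxE mulf_eq0 orbb => /eqP.
Qed.

Lemma gram_unitmx (R : realFieldType) (p k : nat) (C : 'M[R]_(p, k)) :
  (forall v : 'cV[R]_k, C *m v = 0 -> v = 0) -> C^T *m C \in unitmx.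
Proof.
move=> Cinj; rewrite unitmxE unitfE; apply/negP => /det0P [v v0 vCC].
have Cv0 : C *m v^T = 0.
  by apply: self_gram_eq0; rewrite trmx_mul trmxK mulmxA -(mulmxA v) vCC mul0mx.
by move: v0; rewrite -trmx_eq0 (Cinj _ Cv0) eqxx.
Qed.

Lemma normal_eq_difference (R : fieldType) (p k : nat) (C : 'M[R]_(p, k))
  (y : 'cV[R]_p) (a b s : 'cV[R]_k) (lam mu : R) :
  C^T *m C \in unitmx -> lam != 0 -> mu != 0 ->
  lam *: (C^T *m (y - C *m a)) = s -> mu *: (C^T *m (y - C *m b)) = s ->
  a - b = (mu^-1 - lam^-1) *: (invmx (C^T *m C) *m s).
Proof.
move=> CCu lam0 mu0 eq_a eq_b.
have solve (c : R) (x : 'cV[R]_k) : c != 0 -> c *: (C^T *m (y - C *m x)) = s ->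
    x = invmx (C^T *m C) *m (C^T *m y) - c^-1 *: (invmx (C^T *m C) *m s).
  move=> c0 <-; rewrite scalemxAr scalerA mulVf // scale1r !mulmxBr.
  by rewrite [C^T *m (C *m x)]mulmxA mulKmx // opprB addrC subrK.
rewrite (solve _ _ lam0 eq_a) (solve _ _ mu0 eq_b) scalerBl.
by rewrite opprD addrACA subrr add0r opprK addrC.
Qed.

Section LassoSupport.
Variables (R : realType) (m n : nat) (T : 'M[R]_(m, n)) (y : 'cV[R]_m).

Lemma sqnorm2_perturb (x : 'cV[R]_n) (i : 'I_n) (t : R) :
  sqnorm2 (T *m (x + t *: delta_mx i 0) - y) = sqnorm2 (T *m x - y)
   + t * (2 * \sum_(k < m) (T *m x - y) k 0 * T k i) + t ^+ 2 * \sum_(k < m) T k i ^+ 2.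
Proof.
rewrite /sqnorm2 mulmxDr -scalemxAr -colE !mulr_sumr -!big_split /=.
by apply: eq_bigr => k _; rewrite !mxE; ring.
Qed.

Lemma norm1_perturb (x : 'cV[R]_n) (i : 'I_n) (t : R) :
  norm1 (x + t *: delta_mx i 0) = norm1 x + (`|x i 0 + t| - `|x i 0|).
Proof.
rewrite /norm1 (bigD1 i) //= [X in _ = X + _](bigD1 i) //= !mxE eqxx mulr1.
under eq_bigr => k ki do rewrite !mxE (negbTE ki) mulr0 addr0.
by ring.
Qed.

Lemma lasso_xi_entry (lam : R) (x : 'cV[R]_n) (i : 'I_n) :
  lasso_xi lam T y x i 0 = - lam * \sum_(k < m) (T *m x - y) k 0 * T k i.
Proof.
rewrite /lasso_xi !mxE mulNr -mulrN -sumrN; congr (_ * _).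
by apply: eq_bigr => k _; rewrite !mxE; ring.
Qed.

Lemma lasso_obj_perturb (lam : R) (x : 'cV[R]_n) (i : 'I_n) (t : R) :
  x i 0 != 0 -> `|t| < `|x i 0| ->
  lasso_obj lam T y (x + t *: delta_mx i 0) - lasso_obj lam T y x =
    t * (Num.sg (x i 0) - lasso_xi lam T y x i 0)
    + t ^+ 2 * (lam / 2 * \sum_(k < m) T k i ^+ 2).
Proof.
move=> xi0 ht; rewrite /lasso_obj sqnorm2_perturb norm1_perturb.
by rewrite norm_shift // lasso_xi_entry; field.
Qed.

Lemma lasso_stationary (lam : R) (x : 'cV[R]_n) (i : 'I_n) :
  (forall z, lasso_obj lam T y x <= lasso_obj lam T y z) -> x i 0 != 0 ->
  lasso_xi lam T y x i 0 = Num.sg (x i 0).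
Proof.
move=> xmin xi0; apply/eqP; rewrite eq_sym -subr_eq0; apply/eqP.
apply: (@first_order_zero _ _ (lam / 2 * \sum_(k < m) T k i ^+ 2) `|x i 0|).
  by rewrite normr_gt0.
by move=> t ht; rewrite -lasso_obj_perturb // subr_ge0.
Qed.

Variable J : {set 'I_n}.

Definition restrict (u : 'cV[R]_n) : 'cV[R]_#|J| := \col_j u (enum_val j) 0.

Lemma mul_support (u : 'cV[R]_n) : (forall a, a \notin J -> u a 0 = 0) ->
  T *m u = colsJ T J *m restrict u.
Proof.
move=> u0; apply/matrixP => a b; rewrite (ord1 b) !mxE.
rewrite (bigID (mem J)) /= [X in _ + X]big1 ?addr0; last first.
  by move=> c /u0 ->; rewrite mulr0.
rewrite (big_enum_val (fun c => T a c * u c 0)) /=.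
by apply: eq_bigr => j _; rewrite !mxE.
Qed.

Lemma lasso_xi_restrict (lam : R) (u : 'cV[R]_n) :
  (forall a, a \notin J -> u a 0 = 0) ->
  restrict (lasso_xi lam T y u) =
    lam *: ((colsJ T J)^T *m (y - colsJ T J *m restrict u)).
Proof.
move=> u0; rewrite -mul_support //; apply/matrixP => j b; rewrite (ord1 b).
by rewrite !mxE; congr (_ * _); apply: eq_bigr => a _; rewrite !mxE.
Qed.

Lemma colsJ_inj : (forall x : 'cV[R]_n, T *m x = 0 -> x = 0) ->
  forall v : 'cV[R]_#|J|, colsJ T J *m v = 0 -> v = 0.
Proof.
move=> Tinj v Cv0.
pose u : 'cV[R]_n := \col_a \sum_j (a == enum_val j)%:R * v j 0.
have u_pick j0 : u (enum_val j0) 0 = v j0 0.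
  rewrite mxE (bigD1 j0) //= eqxx mul1r big1 ?addr0 // => j jj.
  by rewrite (inj_eq enum_val_inj) eq_sym (negbTE jj) mul0r.
have ruv : restrict u = v by apply/matrixP => j b; rewrite (ord1 b) mxE u_pick.
have u_supp a : a \notin J -> u a 0 = 0.
  move=> aJ; rewrite mxE big1 // => j _.
  by case: eqP => [ej | _]; [move: aJ; rewrite ej enum_valP | rewrite mul0r].
have /Tinj u0 : T *m u = 0 by rewrite (mul_support u_supp) ruv.
by rewrite -ruv u0; apply/matrixP => j b; rewrite !mxE.
Qed.

Lemma lasso_support_difference (lam mu : R) (xl xm : 'cV[R]_n) :
  (forall x : 'cV[R]_n, T *m x = 0 -> x = 0) -> lam != 0 -> mu != 0 ->
  (forall a, a \notin J -> xl a 0 = 0) -> (forall a, a \notin J -> xm a 0 = 0) ->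
  restrict (lasso_xi mu T y xm) = restrict (lasso_xi lam T y xl) ->
  restrict xl - restrict xm =
    (mu^-1 - lam^-1) *: (SJ T J *m restrict (lasso_xi lam T y xl)).
Proof.
move=> Tinj lam0 mu0 xl_supp xm_supp xi_eq.
apply: normal_eq_difference lam0 mu0 _ _; first exact: gram_unitmx (colsJ_inj Tinj).
- by rewrite lasso_xi_restrict.
- by rewrite -xi_eq lasso_xi_restrict.
Qed.

End LassoSupport.

Arguments restrict {R n} J u.

Theorem mainTheorem15 (R : realType) (m n : nat) (T : 'M[R]_(m, n)) (y : 'cV[R]_m)
  (lam mu : R) (xl xm : 'cV[R]_n) :
  (forall x : 'cV[R]_n, T *m x = 0 -> x = 0) ->
  positive_cone_condition T ->
  0 < mu -> mu < lam ->
  is_unique_lasso_min lam T y xl ->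
  is_unique_lasso_min mu T y xm ->
  (forall i : 'I_n, xl i 0 = 0 -> xm i 0 = 0) ->
  (forall i : 'I_n, xl i 0 != 0 -> lasso_xi lam T y xl i 0 = lasso_xi mu T y xm i 0) ->
  forall i : 'I_n, xl i 0 != 0 -> xm i 0 * Num.sg (xl i 0) <= `|xl i 0|.
Proof.
move=> Tinj pcc mu_gt0 mu_lt_lam [xl_min _] _ supp_sub xi_eq i xli0.
have lam_gt0 : 0 < lam := lt_trans mu_gt0 mu_lt_lam.
pose J := [set a | xl a 0 != 0].
have inJ (j : 'I_#|J|) : xl (enum_val j) 0 != 0 by have := enum_valP j; rewrite inE.
have xl_supp a : a \notin J -> xl a 0 = 0 by rewrite inE negbK => /eqP.
have xm_supp a : a \notin J -> xm a 0 = 0 by move/xl_supp/supp_sub.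
pose s := restrict J (lasso_xi lam T y xl).
have s_sg j : s j 0 = Num.sg (xl (enum_val j) 0).
  by rewrite mxE (lasso_stationary xl_min (inJ j)).
have xi_eqJ : restrict J (lasso_xi mu T y xm) = s.
  by apply/matrixP => j b; rewrite (ord1 b) /s [LHS]mxE [RHS]mxE (xi_eq _ (inJ j)).
have := lasso_support_difference Tinj (lt0r_neq0 lam_gt0) (lt0r_neq0 mu_gt0)
  xl_supp xm_supp xi_eqJ.
have iJ : i \in J by rewrite inE.
pose j0 := enum_rank_in iJ i.
have ej0 : enum_val j0 = i by rewrite enum_rankK_in.
move/(congr1 (fun M : 'cV[R]_#|J| => M j0 0)).
rewrite ![in LHS]mxE [in RHS]mxE ej0 -/s => diff_i.
apply: (sign_shrink diff_i); first by rewrite subr_ge0 lef_pV2 ?posrE ?ltW.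
(* diagonal dominance of S_J gives s_j0 (S_J s)_j0 >= 0 *)
rewrite -ej0 -s_sg; apply: le_trans (pcc J _ j0) (diag_dominance_sign _ _ _).
- by apply/set0Pn; exists i.
- by move=> l; rewrite s_sg normr_sg; case: (_ != 0).
- by rewrite s_sg ej0 normr_sg xli0.
Qed.
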